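(* Under the hypotheses of Theorem 3 (a 2-D Lorentzian foliation with $d(H^\flat)=-d(\tilde H^\flat)$, a Lorentzian foliation adapted frame $(e_0,e_1,e_2,e_3)$ on a starlike open set $U$, and the magnetically dominated force-free field $F=u\,e_2^\flat\wedge e_3^\flat$ on $U$ with kernel tangent to the leaves), if the distribution spanned by $e_2$ and $e_3$ is involutive, then $F$ is a vacuum solution, i.e. its current density vector vanishes.
   Context: $(\mathcal M,g)$ is a 4-dimensional spacetime with metric of signature $(-,+,+,+)$ and Levi-Civita connection $\nabla$. An electromagnetic field is a 2-form $F$ with $dF=0$, with current density vector $j^\nu=-\nabla_\mu F^{\mu\nu}$; force-free means $F(j,\chi)=0$ for all $\chi$; magnetically dominated means $F_{\mu\nu}F^{\mu\nu}>0$; vacuum means $j=0$. A 2-D Lorentzian foliation is a foliation by 2-dimensional submanifolds with Lorentzian induced metric; a Lorentzian foliation adapted frame is an orthonormal frame ($g(e_\mu,e_\nu)=\mathrm{diag}(-1,1,1,1)_{\mu\nu}$) with $e_0,e_1$ spanning the leaves' tangent spaces. $H$, $\tilde H$ are defined by $2H=[-g(\nabla_{e_0}e_0,e_2)+g(\nabla_{e_1}e_1,e_2)]e_2+[-g(\nabla_{e_0}e_0,e_3)+g(\nabla_{e_1}e_1,e_3)]e_3$, $2\tilde H=[-g(\nabla_{e_2}e_2,e_0)-g(\nabla_{e_3}e_3,e_0)]e_0+[g(\nabla_{e_2}e_2,e_1)+g(\nabla_{e_3}e_3,e_1)]e_1$. A distribution is involutive if it is closed under the Lie bracket. *)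

(* Local-coordinate formalization:
   the starlike open set U is viewed (via a chart) as a subset of R^4,
   tensors are given by their coordinate components. *)
From HB Require Import structures.
From mathcomp Require Import all_boot all_order all_algebra.
From mathcomp Require Import all_classical all_reals all_analysis.
Set Implicit Arguments. Unset Strict Implicit. Unset Printing Implicit Defensive.
Import Order.TTheory GRing.Theory Num.Theory.
Import numFieldNormedType.Exports.
Local Open Scope classical_set_scope.
Local Open Scope ring_scope.

Section Spacetime.
Variable R : realType.

Definition pt := 'rV[R]_4.
(* a vector field: its 4 contravariant components at each point *)
Definition vfield := pt -> 'I_4 -> R.
(* a 1-form: covariant components *)
Definition form1 := pt -> 'I_4 -> R.
Definition tens2 := pt -> 'I_4 -> 'I_4 -> R.

Definition cbasis (i : 'I_4) : pt := \row_(j < 4) (i == j)%:R.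

Definition pd (i : 'I_4) (f : pt -> R) : pt -> R :=
  fun x => derive f x (cbasis i).

Fixpoint Ck (k : nat) (U : set pt) (f : pt -> R) : Prop :=
  match k with
  | 0 => forall x, U x -> {for x, continuous f}
  | k'.+1 => (forall x, U x -> {for x, continuous f}) /\
             forall i, (forall x, U x -> derivable f x (cbasis i)) /\ Ck k' U (pd i f)
  end.

Definition smooth (U : set pt) (f : pt -> R) : Prop := forall k, Ck k U f.

Definition starlike (U : set pt) : Prop :=
  exists2 p, U p & forall x, U x -> forall t : R, 0 <= t <= 1 -> U (p + t *: (x - p)).

Definition metric := pt -> 'M[R]_4.
Definition ginv (g : metric) (x : pt) : 'M[R]_4 := invmx (g x).

Definition christ (g : metric) (x : pt) (k i j : 'I_4) : R :=
  (2%:R)^-1 * \sum_(l < 4) ginv g x k l *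
     (pd i (fun y => g y l j) x + pd j (fun y => g y l i) x - pd l (fun y => g y i j) x).

Definition gdot (g : metric) (x : pt) (X Y : 'I_4 -> R) : R :=
  \sum_(i < 4) \sum_(j < 4) g x i j * X i * Y j.

Definition nabla (g : metric) (X Y : vfield) : vfield := fun x k =>
  \sum_(i < 4) X x i * pd i (fun y => Y y k) x
  + \sum_(i < 4) \sum_(j < 4) christ g x k i j * X x i * Y x j.

Definition lie (X Y : vfield) : vfield := fun x k =>
  \sum_(i < 4) (X x i * pd i (fun y => Y y k) x - Y x i * pd i (fun y => X y k) x).

Definition flat (g : metric) (X : vfield) : form1 := fun x i =>
  \sum_(j < 4) g x i j * X x j.

Definition d1 (a : form1) : tens2 := fun x i j =>
  pd i (fun y => a y j) x - pd j (fun y => a y i) x.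

Definition closed2 (U : set pt) (F : tens2) : Prop :=
  forall x, U x -> forall i j k : 'I_4,
    pd i (fun y => F y j k) x + pd j (fun y => F y k i) x + pd k (fun y => F y i j) x = 0.

Definition wedge (a b : form1) : tens2 := fun x i j => a x i * b x j - a x j * b x i.

Definition raise2 (g : metric) (F : tens2) : tens2 := fun x m n =>
  \sum_(a < 4) \sum_(b < 4) ginv g x m a * ginv g x n b * F x a b.

(* current density j^nu = - nabla_mu F^{mu nu} *)
Definition current (g : metric) (F : tens2) : vfield := fun x n =>
  let G := raise2 g F in
  - (\sum_(m < 4) pd m (fun y => G y m n) x
     + \sum_(m < 4) \sum_(l < 4) christ g x m m l * G x l n
     + \sum_(m < 4) \sum_(l < 4) christ g x n m l * G x m l).

Definition force_free (g : metric) (U : set pt) (F : tens2) : Prop :=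
  forall x, U x -> forall chi : 'I_4 -> R,
    \sum_(a < 4) \sum_(b < 4) F x a b * current g F x a * chi b = 0.

Definition magn_dominated (g : metric) (U : set pt) (F : tens2) : Prop :=
  forall x, U x -> 0 < \sum_(a < 4) \sum_(b < 4) F x a b * raise2 g F x a b.

Definition eta (m n : 'I_4) : R :=
  if m == n then (if m == 0 then -1 else 1) else 0.

Definition orthonormal_frame (g : metric) (U : set pt) (e : 'I_4 -> vfield) : Prop :=
  forall x, U x -> forall m n, gdot g x (e m x) (e n x) = eta m n.

Definition involutive2 (U : set pt) (X Y : vfield) : Prop :=
  forall x, U x -> exists a b : R, forall k, lie X Y x k = a * X x k + b * Y x k.

(* mean curvature type vector fields H and Htilde of the frame *)
Definition Hvec (g : metric) (e : 'I_4 -> vfield) : vfield := fun x k =>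
  (2%:R)^-1 *
  ((- gdot g x (nabla g (e 0) (e 0) x) (e 2%:R x) + gdot g x (nabla g (e 1) (e 1) x) (e 2%:R x))
     * e 2%:R x k
   + (- gdot g x (nabla g (e 0) (e 0) x) (e 3%:R x) + gdot g x (nabla g (e 1) (e 1) x) (e 3%:R x))
     * e 3%:R x k).

Definition Htvec (g : metric) (e : 'I_4 -> vfield) : vfield := fun x k =>
  (2%:R)^-1 *
  ((- gdot g x (nabla g (e 2%:R) (e 2%:R) x) (e 0 x) - gdot g x (nabla g (e 3%:R) (e 3%:R) x) (e 0 x))
     * e 0 x k
   + (gdot g x (nabla g (e 2%:R) (e 2%:R) x) (e 1 x) + gdot g x (nabla g (e 3%:R) (e 3%:R) x) (e 1 x))
     * e 1 x k).

End Spacetime.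

From Pilot Require Import Defs.
From HB Require Import structures.
From mathcomp Require Import all_boot all_order all_algebra.
From mathcomp Require Import all_classical all_reals all_analysis.
From mathcomp Require Import ring lra.
Import Order.TTheory GRing.Theory Num.Theory.
Import numFieldNormedType.Exports.
Local Open Scope classical_set_scope.
Local Open Scope ring_scope.

(* For F = u A^flat /\ B^flat with A = e_2, B = e_3, raising
   indices gives F^{mn} = u (A^m B^n - B^m A^n), and the Leibniz rule for
   the covariant divergence yields the identity
        j = div(u B) A - div(u A) B - u [A, B],
   where the Christoffel term Gamma^n_{ml} F^{ml} drops out because the
   Levi-Civita symbols are symmetric in (m, l) while F^{ml} is antisymmetric.
   If span(e_2, e_3) is involutive, [e_2, e_3] lies in that span, hence so
   does j.  On the other hand force-freeness says that j lies in the kernel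
   of F, which by hypothesis is spanned by e_0, e_1.  Since the frame is
   orthonormal the two spans meet only in 0, so j = 0.
   The file first proves the calculus facts (locality and Leibniz rule of
   coordinate derivatives), then the algebra of the metric (invertibility,
   raising a wedge of flats), then the divergence identity for a general
   wedge, the orthogonality of the two spans, and finally the corollary. *)

Section Calculus.
Context {R : realType}.

Lemma pd_local (U : set (pt R)) (f h : pt R -> R) i x : open U -> U x ->
  (forall y, U y -> f y = h y) -> pd i f x = pd i h x.
Proof.
move=> oU Ux fh; rewrite /pd; apply: near_eq_derive.
have : \forall y \near x, U y by exact: open_nbhs_nbhs.
by apply: filterS => y /fh.
Qed.

Lemma pdM (f h : pt R -> R) i x :
  derivable f x (cbasis R i) -> derivable h x (cbasis R i) ->
  pd i (fun y => f y * h y) x = f x * pd i h x + h x * pd i f x.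
Proof. by move=> df dh; rewrite /pd (deriveM df dh). Qed.

Lemma pdB (f h : pt R -> R) i x :
  derivable f x (cbasis R i) -> derivable h x (cbasis R i) ->
  pd i (fun y => f y - h y) x = pd i f x - pd i h x.
Proof. by move=> df dh; rewrite /pd (deriveB df dh). Qed.

Lemma smooth_derivable {U : set (pt R)} {f : pt R -> R} {i x} :
  smooth U f -> U x -> derivable f x (cbasis R i).
Proof. by move=> sf Ux; exact: ((sf 1%N).2 i).1 x Ux. Qed.

End Calculus.

Section MetricAlgebra.
Context {R : realType}.

Lemma eta_involutive (i j : 'I_4) :
  \sum_(k < 4) @Defs.eta R i k * @Defs.eta R k j = (i == j)%:R.
Proof.
rewrite (bigD1 i) //= big1 ?addr0; last first.
  by move=> k /negbTE ki; rewrite /Defs.eta eq_sym ki mul0r.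
rewrite /Defs.eta eqxx; case: (i == j); last by rewrite mulr0.
by case: ifP => _; rewrite ?mulrNN mulr1.
Qed.

(* A metric admitting an orthonormal frame at a point is invertible there:
   with E the frame matrix, E^T g E = eta and eta^2 = 1. *)
Lemma orthonormal_metric_unit {g : metric R} {e : 'I_4 -> vfield R} {y} :
  (forall m n, gdot g y (e m y) (e n y) = @Defs.eta R m n) -> g y \in unitmx.
Proof.
move=> on.
pose E : 'M[R]_4 := \matrix_(i, m) e m y i.
pose Eta : 'M[R]_4 := \matrix_(m, n) @Defs.eta R m n.
have gram : E^T *m g y *m E = Eta.
  apply/matrixP => m n; rewrite !mxE -on /gdot.
  under eq_bigr do rewrite !mxE big_distrl /=.
  rewrite exchange_big /=; apply: eq_bigr => i _; apply: eq_bigr => k _.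
  by rewrite !mxE [e m y i * _]mulrC.
have eta_sq : Eta *m Eta = 1%:M.
  apply/matrixP => i j; rewrite !mxE.
  by under eq_bigr do rewrite !mxE; rewrite eta_involutive.
have : (E^T *m g y *m E) *m Eta = 1%:M by rewrite gram.
move=> /mulmx1_unit [].
by rewrite !unitmx_mul => /andP[/andP[_ ->]].
Qed.

Lemma sharp_flat (g : metric R) y (X : vfield R) m : g y \in unitmx ->
  \sum_(a < 4) ginv g y m a * flat g X y a = X y m.
Proof.
move=> gu; rewrite /flat.
under eq_bigr do rewrite big_distrr.
rewrite exchange_big /=.
transitivity (\sum_(j < 4) (invmx (g y) *m g y) m j * X y j).
  apply: eq_bigr => j _; rewrite mxE big_distrl; apply: eq_bigr => a _.
  by rewrite /ginv mulrA.
rewrite mulVmx // (bigD1 m) //= big1 ?addr0; first by rewrite mxE eqxx mul1r.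
by move=> j /negbTE jm; rewrite mxE eq_sym jm mul0r.
Qed.

Lemma raise2_wedge_flat (g : metric R) y (A B : vfield R) (u : pt R -> R) m n :
  g y \in unitmx ->
  raise2 g (fun x i j => u x * wedge (flat g A) (flat g B) x i j) y m n =
  u y * (A y m * B y n - B y m * A y n).
Proof.
move=> gu; rewrite /raise2 /wedge.
rewrite -(sharp_flat g y A m gu) -(sharp_flat g y B n gu).
rewrite -(sharp_flat g y B m gu) -(sharp_flat g y A n gu).
rewrite !big_distrlr /= -sumrB mulr_sumr; apply: eq_bigr => a _.
rewrite -sumrB mulr_sumr; apply: eq_bigr => b _.
ring.
Qed.

Lemma gdot_linear (g : metric R) x (X Y Z : 'I_4 -> R) a b :
  gdot g x (fun k => a * X k + b * Y k) Z = a * gdot g x X Z + b * gdot g x Y Z.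
Proof.
rewrite /gdot !mulr_sumr -big_split; apply: eq_bigr => i _.
rewrite !mulr_sumr -big_split; apply: eq_bigr => j _ /=; ring.
Qed.

(* span(e_0, e_1) and span(e_2, e_3) meet only in 0 for an orthonormal frame:
   pairing with e_2 and e_3 computes the coefficients of the second span. *)
Lemma frame_spans_disjoint {g : metric R} {e : 'I_4 -> vfield R} {x}
    {V : 'I_4 -> R} {a b c d : R} :
  (forall m n, gdot g x (e m x) (e n x) = @Defs.eta R m n) ->
  (forall k, V k = a * e 0 x k + b * e 1 x k) ->
  (forall k, V k = c * e 2%:R x k + d * e 3%:R x k) ->
  forall k, V k = 0.
Proof.
move=> on V01 V23.
have coeffs m : a * @Defs.eta R 0 m + b * @Defs.eta R 1 m
                = c * @Defs.eta R 2%:R m + d * @Defs.eta R 3%:R m.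
  by rewrite -!on -!gdot_linear -(funext V01) -(funext V23).
have c0 : c = 0 by have := coeffs 2%:R; rewrite /Defs.eta /=; lra.
have d0 : d = 0 by have := coeffs 3%:R; rewrite /Defs.eta /=; lra.
by move=> k; rewrite V23 c0 d0 !mul0r addr0.
Qed.

End MetricAlgebra.

Definition cdiv {R : realType} (g : metric R) (V : vfield R) (x : pt R) : R :=
  \sum_(m < 4) pd m (fun y => V y m) x
  + \sum_(m < 4) \sum_(l < 4) christ g x m m l * V x l.

Section Divergence.
Context {R : realType} {U : set (pt R)} {g : metric R}.
Hypothesis oU : open U.
Hypothesis gsym : forall y, U y -> (g y)^T = g y.
Hypothesis gunit : forall y, U y -> g y \in unitmx.

Lemma christ_sym x k i j : U x -> christ g x k i j = christ g x k j i.
Proof.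
move=> Ux; rewrite /christ; congr (_ * _); apply: eq_bigr => l _.
rewrite (@pd_local _ U (fun y => g y i j) (fun y => g y j i)) //; last first.
  by move=> y Uy; have := congr1 (fun M : 'M[R]_4 => M j i) (gsym y Uy); rewrite mxE.
by rewrite [pd i _ _ + _]addrC.
Qed.

Lemma christ_antisym_contract x n (T : 'I_4 -> 'I_4 -> R) : U x ->
  (forall m l, T m l = - T l m) ->
  \sum_(m < 4) \sum_(l < 4) christ g x n m l * T m l = 0.
Proof.
move=> Ux Tanti; set S := (X in X = 0).
have SN : S = - S.
  rewrite {1}/S exchange_big /S -sumrN; apply: eq_bigr => m _.
  rewrite -sumrN; apply: eq_bigr => l _.
  by rewrite (christ_sym x n m l Ux) Tanti mulrN.
by have := SN; lra.
Qed.

Lemma current_wedge_flat (A B : vfield R) (u : pt R -> R) x : U x ->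
  (forall i, derivable u x (cbasis R i)) ->
  (forall k i, derivable (fun y => A y k) x (cbasis R i)) ->
  (forall k i, derivable (fun y => B y k) x (cbasis R i)) ->
  forall n,
  current g (fun y i j => u y * wedge (flat g A) (flat g B) y i j) x n =
  cdiv g (fun y k => u y * B y k) x * A x n
  - cdiv g (fun y k => u y * A y k) x * B x n - u x * lie A B x n.
Proof.
move=> Ux du dA dB n.
set F := fun y i j => _.
have FE y m k : U y -> raise2 g F y m k = u y * (A y m * B y k - B y m * A y k).
  by move=> Uy; rewrite raise2_wedge_flat //; exact: gunit.
pose uA m := pd m (fun y => u y * A y m) x.
pose uB m := pd m (fun y => u y * B y m) x.
have pdF m : pd m (fun y => raise2 g F y m n) x =
    uA m * B x n - uB m * A x n
    + u x * (A x m * pd m (fun y => B y n) x - B x m * pd m (fun y => A y n) x).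
  rewrite (@pd_local _ U _
      (fun y => (u y * A y m) * B y n - (u y * B y m) * A y n)) //; last first.
    by move=> y Uy; rewrite FE //; ring.
  have duA j : derivable (fun y => u y * A y j) x (cbasis R m) by exact: derivableM.
  have duB j : derivable (fun y => u y * B y j) x (cbasis R m) by exact: derivableM.
  rewrite pdB; try exact: derivableM.
  rewrite (pdM (fun y => u y * A y m)) // (pdM (fun y => u y * B y m)) //.
  by rewrite /uA /uB; ring.
have christ_n : \sum_(m < 4) \sum_(l < 4) christ g x n m l * raise2 g F x m l = 0.
  by apply: christ_antisym_contract => // m l; rewrite !FE //; ring.
rewrite /current /= christ_n addr0 /cdiv.
under eq_bigr do rewrite pdF.
under [X in _ + X]eq_bigr do under eq_bigr do rewrite FE //.
have sum_pd : \sum_(m < 4) (uA m * B x n - uB m * A x n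
      + u x * (A x m * pd m (fun y => B y n) x - B x m * pd m (fun y => A y n) x))
    = (\sum_(m < 4) uA m) * B x n - (\sum_(m < 4) uB m) * A x n + u x * lie A B x n.
  rewrite /lie !big_distrl mulr_sumr -sumrB -!big_split /=.
  by apply: eq_bigr => m _; ring.
have sum_christ : \sum_(m < 4) \sum_(l < 4)
      christ g x m m l * (u x * (A x l * B x n - B x l * A x n))
    = (\sum_(m < 4) \sum_(l < 4) christ g x m m l * (u x * A x l)) * B x n
    - (\sum_(m < 4) \sum_(l < 4) christ g x m m l * (u x * B x l)) * A x n.
  rewrite !big_distrl -sumrB; apply: eq_bigr => m _.
  by rewrite !big_distrl -sumrB; apply: eq_bigr => l _ /=; ring.
by rewrite sum_pd sum_christ /uA /uB; ring.
Qed.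

End Divergence.

Theorem corollary1 (R : realType) (U : set (pt R)) (g : metric R)
  (e : 'I_4 -> vfield R) (u : pt R -> R) :
  open U -> starlike U ->
  (* smooth symmetric metric on U *)
  (forall i j : 'I_4, smooth U (fun x => g x i j)) ->
  (forall x, U x -> (g x)^T = g x) ->
  (* smooth orthonormal frame *)
  (forall m k : 'I_4, smooth U (fun x => e m x k)) ->
  orthonormal_frame g U e ->
  (* e_0, e_1 span the tangent spaces of the leaves of a 2-D foliation *)
  involutive2 U (e 0) (e 1) ->
  (* d(H^flat) = - d(Htilde^flat) *)
  (forall x, U x -> forall i j : 'I_4,
     d1 (flat g (Hvec g e)) x i j = - d1 (flat g (Htvec g e)) x i j) ->
  (* F = u e_2^flat /\ e_3^flat, closed, force-free, magnetically dominated *)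
  smooth U u ->
  let F := fun x i j => u x * wedge (flat g (e 2%:R)) (flat g (e 3%:R)) x i j in
  closed2 U F ->
  force_free g U F ->
  magn_dominated g U F ->
  (* kernel of F tangent to the leaves *)
  (forall x, U x -> forall X : 'I_4 -> R,
     (forall Y : 'I_4 -> R, \sum_(a < 4) \sum_(b < 4) F x a b * X a * Y b = 0) ->
     exists a b : R, forall k, X k = a * e 0 x k + b * e 1 x k) ->
  (* the distribution spanned by e_2, e_3 is involutive *)
  involutive2 U (e 2%:R) (e 3%:R) ->
  forall x, U x -> forall n : 'I_4, current g F x n = 0.
Proof.
move=> oU _ _ gsym e_smooth on _ _ u_smooth F _ force_free_F _ kerF inv23 x Ux.
have gunit y : U y -> g y \in unitmx.
  by move=> Uy; exact: orthonormal_metric_unit (on y Uy).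
have de m k i : derivable (fun y => e m y k) x (cbasis R i).
  exact: smooth_derivable (e_smooth m k) Ux.
have du i : derivable u x (cbasis R i) by exact: smooth_derivable u_smooth Ux.
(* force-freeness: j lies in the kernel of F, i.e. in span(e_0, e_1) *)
have [a [b j_span01]] := kerF x Ux (current g F x) (force_free_F x Ux).
(* the divergence identity and involutivity: j lies in span(e_2, e_3) *)
have [c [d lie23]] := inv23 x Ux.
have j_span23 k : current g F x k =
    (cdiv g (fun y k => u y * e 3%:R y k) x - u x * c) * e 2%:R x k
    + (- cdiv g (fun y k => u y * e 2%:R y k) x - u x * d) * e 3%:R x k.
  by rewrite /F (current_wedge_flat oU gsym gunit) // lie23; ring.
exact: frame_spans_disjoint (on x Ux) j_span01 j_span23.
Qed.
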